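(* Let $\alpha_i,\beta_i,\gamma_i,\delta_i\in(0,\pi)$ satisfy $\alpha_i\pm\beta_i\pm\gamma_i\pm\delta_i\not\equiv0\pmod{2\pi}$ for all sign choices, and suppose $M_i>0$. Then $\overline{\alpha}_i,\overline{\beta}_i,\overline{\gamma}_i,\overline{\delta}_i\in(0,\pi)$ and \[r_i,\ s_i,\ f_i,\ (r_i-1)(r_i-M_i),\ (s_i-1)(s_i-M_i),\ (f_i-1)(f_i-M_i),\ (r_i-1)(s_i-1)(f_i-1)(1-M_i)\] are all strictly positive.
   Context: $\sigma_i=(\alpha_i+\beta_i+\gamma_i+\delta_i)/2$, $\overline{\alpha}_i=\sigma_i-\alpha_i$, $\overline{\beta}_i=\sigma_i-\beta_i$, $\overline{\gamma}_i=\sigma_i-\gamma_i$, $\overline{\delta}_i=\sigma_i-\delta_i$; $a_i=\sin\alpha_i/\sin\overline{\alpha}_i$, $b_i=\sin\beta_i/\sin\overline{\beta}_i$, $c_i=\sin\gamma_i/\sin\overline{\gamma}_i$, $d_i=\sin\delta_i/\sin\overline{\delta}_i$, $M_i=a_ib_ic_id_i$, $r_i=a_id_i$, $s_i=c_id_i$, $f_i=a_ic_i$. *)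

From Stdlib Require Import Reals.
Open Scope R_scope.

Definition sigma (al be ga de : R) : R := (al + be + ga + de) / 2.
Definition albar (al be ga de : R) : R := sigma al be ga de - al.
Definition bebar (al be ga de : R) : R := sigma al be ga de - be.
Definition gabar (al be ga de : R) : R := sigma al be ga de - ga.
Definition debar (al be ga de : R) : R := sigma al be ga de - de.

Definition ca (al be ga de : R) : R := sin al / sin (albar al be ga de).
Definition cb (al be ga de : R) : R := sin be / sin (bebar al be ga de).
Definition cc (al be ga de : R) : R := sin ga / sin (gabar al be ga de).
Definition cd (al be ga de : R) : R := sin de / sin (debar al be ga de).

Definition cM (al be ga de : R) : R :=
  ca al be ga de * cb al be ga de * cc al be ga de * cd al be ga de.
Definition cr (al be ga de : R) : R := ca al be ga de * cd al be ga de.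
Definition cs (al be ga de : R) : R := cc al be ga de * cd al be ga de.
Definition cf (al be ga de : R) : R := ca al be ga de * cc al be ga de.

Definition sgn (b : bool) : R := if b then 1 else -1.

From Pilot Require Import Defs.
From Stdlib Require Import Reals Lra.
Open Scope R_scope.

(* Product-to-sum gives, for every s,
     sin x sin y - sin (s - x) sin (s - y) = sin s sin (x + y - s),
   so r_i - 1, s_i - 1, f_i - 1, 1 - b_i c_i, 1 - a_i b_i and 1 - b_i d_i are each
   sin σ_i times the sine of a half signed sum (α_i ± β_i ± γ_i ± δ_i)/2, divided by
   sines of barred angles; likewise 1 - M_i = - sin σ_i sin e1 sin e2 sin e3 divided by
   the product of the sines of the barred angles, the e_j being the half signed sums
   with two minus signs.  The hypothesis on α_i ± β_i ± γ_i ± δ_i says exactly that all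
   these sines are nonzero, and once the barred angles lie in (0, π) every claimed
   quantity is a positive multiple of a square.  They do: any two barred angles have
   sum in (0, 2π) and difference in (-π, π), so if one of them left (0, π) the other
   three would stay inside and M_i would be <= 0. *)

(* [ca al be ga de] is [sin_ratio (sigma al be ga de) al] by conversion. *)
Definition sin_ratio (s x : R) : R := sin x / sin (s - x).

Lemma sin_mul_sub_sin_sub_mul (s x y : R) :
  sin x * sin y - sin (s - x) * sin (s - y) = sin s * sin (x + y - s).
Proof.
  rewrite !sin_minus, sin_plus, cos_plus.
  pose proof (sin2_cos2 s) as Hpyth; unfold Rsqr in Hpyth.
  replace (sin x * sin y) with ((sin s * sin s + cos s * cos s) * (sin x * sin y)) at 1
    by (rewrite Hpyth; ring).
  ring.
Qed.

Lemma sin_mul_sub_sin_mul_of_add_eq (x y u v : R) :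
  x + y = u + v -> sin x * sin y - sin u * sin v = sin (x - u) * sin (v - x).
Proof.
  intros Hsum.
  replace v with (x + y - u) by lra.
  replace (x + y - u - x) with (y - u) by ring.
  rewrite !sin_minus, sin_plus, cos_plus.
  pose proof (sin2_cos2 u) as Hpyth; unfold Rsqr in Hpyth.
  replace (sin x * sin y) with ((sin u * sin u + cos u * cos u) * (sin x * sin y)) at 1
    by (rewrite Hpyth; ring).
  ring.
Qed.

Lemma sin_sub_prod4 (s x y u v : R) :
  x + y + u + v = 2 * s ->
  sin (s - x) * sin (s - y) * sin (s - u) * sin (s - v) - sin x * sin y * sin u * sin v
  = - sin s * sin (x + y - s) * sin (x + u - s) * sin (x + v - s).
Proof.
  intros Hsum.
  pose proof (sin_mul_sub_sin_sub_mul s x v) as Hxv.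
  pose proof (sin_mul_sub_sin_sub_mul s y u) as Hyu.
  pose proof (sin_mul_sub_sin_mul_of_add_eq x v (s - y) (s - u)) as Hcross.
  replace (y + u - s) with (- (x + v - s)) in Hyu by lra.
  replace (x - (s - y)) with (x + y - s) in Hcross by ring.
  replace (s - u - x) with (- (x + u - s)) in Hcross by ring.
  rewrite sin_neg in Hyu, Hcross.
  specialize (Hcross ltac:(lra)).
  (* expanding sin x sin v and sin y sin u by [Hxv] and [Hyu] leaves exactly [Hcross] *)
  replace (sin x * sin y * sin u * sin v) with ((sin x * sin v) * (sin y * sin u)) by ring.
  replace (sin x * sin v) with (sin (s - x) * sin (s - v) + sin s * sin (x + v - s)) in *
    by lra.
  replace (sin y * sin u) with (sin (s - y) * sin (s - u) - sin s * sin (x + v - s)) by lra.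
  replace (- sin s * sin (x + y - s) * sin (x + u - s) * sin (x + v - s))
    with (sin s * sin (x + v - s) * (sin (x + y - s) * - sin (x + u - s))) by ring.
  rewrite <- Hcross. ring.
Qed.

Lemma sin_ratio_mul_sub1 (s x y : R) :
  sin (s - x) <> 0 -> sin (s - y) <> 0 ->
  sin_ratio s x * sin_ratio s y - 1 = sin s * sin (x + y - s) / (sin (s - x) * sin (s - y)).
Proof.
  intros Hx Hy.
  rewrite <- sin_mul_sub_sin_sub_mul.
  unfold sin_ratio. field. auto.
Qed.

Lemma one_sub_sin_ratio_prod4 (s x y u v : R) :
  x + y + u + v = 2 * s ->
  sin (s - x) <> 0 -> sin (s - y) <> 0 -> sin (s - u) <> 0 -> sin (s - v) <> 0 ->
  1 - sin_ratio s x * sin_ratio s y * sin_ratio s u * sin_ratio s v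
  = - sin s * sin (x + y - s) * sin (x + u - s) * sin (x + v - s)
    / (sin (s - x) * sin (s - y) * sin (s - u) * sin (s - v)).
Proof.
  intros Hsum Hx Hy Hu Hv.
  rewrite <- sin_sub_prod4 by exact Hsum.
  unfold sin_ratio. field. auto.
Qed.

Lemma sin_nonpos_of_not_in_0_PI (a : R) :
  -PI <= a <= 2 * PI -> a <= 0 \/ PI <= a -> sin a <= 0.
Proof.
  intros Ha [Hneg | Hbig].
  - rewrite <- (Ropp_involutive a), sin_neg.
    pose proof (sin_ge_0 (- a)). lra.
  - apply sin_le_0; lra.
Qed.

Lemma sub_in_0_PI_of_sin_ratio_prod_pos (s x y u v : R) :
  x + y + u + v = 2 * s ->
  0 < x < PI -> 0 < y < PI -> 0 < u < PI -> 0 < v < PI ->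
  0 < sin_ratio s x * sin_ratio s y * sin_ratio s u * sin_ratio s v ->
  0 < s - x < PI.
Proof.
  intros Hsum Hx Hy Hu Hv Hprod.
  destruct (ltac:(lra) : 0 < s - x < PI \/ s - x <= 0 \/ PI <= s - x) as [Hin | Hout];
    [exact Hin | exfalso].
  assert (Hother : forall w, 0 < w < PI -> 0 < 2 * s - x - w < 2 * PI -> 0 < sin_ratio s w).
  { intros w Hw Hpair.
    apply Rdiv_lt_0_compat; apply sin_gt_0; lra. }
  assert (Hsx : sin (s - x) <= 0) by (apply sin_nonpos_of_not_in_0_PI; lra).
  (* [sin_ratio s x <= 0] holds also when [sin (s - x) = 0], as then the ratio is 0 *)
  assert (Hratio : sin_ratio s x <= 0).
  { unfold sin_ratio.
    destruct (Req_dec (sin (s - x)) 0) as [Hzero | Hnz].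
    - rewrite Hzero. unfold Rdiv. rewrite Rinv_0. lra.
    - apply Rlt_le, Rdiv_pos_neg; [apply sin_gt_0|]; lra. }
  assert (Hrest : 0 < sin_ratio s y * sin_ratio s u * sin_ratio s v).
  { apply Rmult_lt_0_compat; [apply Rmult_lt_0_compat|]; apply Hother; lra. }
  pose proof (Rmult_le_compat_r _ _ _ (Rlt_le _ _ Hrest) Hratio).
  lra.
Qed.

Lemma sin_ratio_pair_pos (s x y u v : R) :
  x + y + u + v = 2 * s ->
  0 < sin (s - x) -> 0 < sin (s - y) -> 0 < sin (s - u) -> 0 < sin (s - v) ->
  sin s <> 0 -> sin (x + y - s) <> 0 ->
  0 < sin_ratio s x * sin_ratio s y ->
  0 < (sin_ratio s x * sin_ratio s y - 1)
      * (sin_ratio s x * sin_ratio s y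
         - sin_ratio s x * sin_ratio s y * (sin_ratio s u * sin_ratio s v)).
Proof.
  intros Hsum Hx Hy Hu Hv HK HE Hr.
  set (r := sin_ratio s x * sin_ratio s y).
  assert (Hq : sin_ratio s u * sin_ratio s v - 1
               = - (sin s * sin (x + y - s)) / (sin (s - u) * sin (s - v))).
  { rewrite sin_ratio_mul_sub1 by lra.
    replace (u + v - s) with (- (x + y - s)) by lra.
    rewrite sin_neg. field. lra. }
  replace ((r - 1) * (r - r * (sin_ratio s u * sin_ratio s v)))
    with (r * (sin s * sin (x + y - s))²
          / (sin (s - x) * sin (s - y) * sin (s - u) * sin (s - v))).
  - apply Rdiv_lt_0_compat.
    + apply Rmult_lt_0_compat; [exact Hr|].
      apply Rsqr_pos_lt, Rmult_integral_contrapositive_currified; assumption.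
    + repeat apply Rmult_lt_0_compat; assumption.
  - replace (r - r * (sin_ratio s u * sin_ratio s v))
      with (- r * (sin_ratio s u * sin_ratio s v - 1)) by ring.
    unfold r at 2. rewrite Hq, sin_ratio_mul_sub1 by lra.
    unfold Rsqr. field. repeat split; lra.
Qed.

Lemma sin_ratio_cycle_pos (s x y u v : R) :
  x + y + u + v = 2 * s ->
  0 < sin (s - x) -> 0 < sin (s - y) -> 0 < sin (s - u) -> 0 < sin (s - v) ->
  sin s <> 0 -> sin (x + y - s) <> 0 -> sin (x + u - s) <> 0 -> sin (x + v - s) <> 0 ->
  0 < (sin_ratio s x * sin_ratio s v - 1) * (sin_ratio s u * sin_ratio s v - 1)
      * (sin_ratio s x * sin_ratio s u - 1)
      * (1 - sin_ratio s x * sin_ratio s y * sin_ratio s u * sin_ratio s v).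
Proof.
  intros Hsum Hx Hy Hu Hv HK Ey Eu Ev.
  rewrite !sin_ratio_mul_sub1, one_sub_sin_ratio_prod4 by lra.
  replace (u + v - s) with (- (x + y - s)) by lra.
  rewrite sin_neg.
  set (T := sin (s - x) * sin (s - u) * sin (s - v)).
  replace (_ * _ * _ * _)
    with ((sin s * sin s * sin (x + y - s) * sin (x + u - s) * sin (x + v - s))²
          / (T ^ 3 * sin (s - y))).
  - apply Rdiv_lt_0_compat.
    + apply Rsqr_pos_lt.
      repeat apply Rmult_integral_contrapositive_currified; assumption.
    + apply Rmult_lt_0_compat; [apply pow_lt|exact Hy].
      unfold T; repeat apply Rmult_lt_0_compat; assumption.
  - unfold T, Rsqr. field. repeat split; lra.
Qed.

Lemma sin_neq0_of_double (w z : R) :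
  (forall k : Z, z <> 2 * IZR k * PI) -> z = 2 * w -> sin w <> 0.
Proof.
  intros Hz Hw Hsin.
  destruct (sin_eq_0_0 w Hsin) as [k Hk].
  apply (Hz k). rewrite Hw, Hk. ring.
Qed.

(* Qualified, since [Reals] also exports a [sigma] (finite sums) that shadows it. *)
Lemma sum_eq_twice_sigma (al be ga de : R) : al + be + ga + de = 2 * Defs.sigma al be ga de.
Proof. unfold Defs.sigma. field. Qed.

Section Angles.

Variables al be ga de : R.
Hypothesis Hal : 0 < al < PI.
Hypothesis Hbe : 0 < be < PI.
Hypothesis Hga : 0 < ga < PI.
Hypothesis Hde : 0 < de < PI.
Hypothesis Hnondeg : forall (s1 s2 s3 : bool) (k : Z),
  al + sgn s1 * be + sgn s2 * ga + sgn s3 * de <> 2 * IZR k * PI.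
Hypothesis HM : 0 < cM al be ga de.

Local Notation s := (Defs.sigma al be ga de).

Let Hsum : al + be + ga + de = 2 * s := sum_eq_twice_sigma al be ga de.

Lemma barred_angles_in_0_PI :
  0 < albar al be ga de < PI /\ 0 < bebar al be ga de < PI /\
  0 < gabar al be ga de < PI /\ 0 < debar al be ga de < PI.
Proof.
  assert (Hprod : 0 < sin_ratio s al * sin_ratio s be * sin_ratio s ga * sin_ratio s de)
    by exact HM.
  split; [|split; [|split]].
  - apply (sub_in_0_PI_of_sin_ratio_prod_pos s al be ga de); lra.
  - apply (sub_in_0_PI_of_sin_ratio_prod_pos s be al ga de); lra.
  - apply (sub_in_0_PI_of_sin_ratio_prod_pos s ga al be de); lra.
  - apply (sub_in_0_PI_of_sin_ratio_prod_pos s de al be ga); lra.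
Qed.

Let sin_barred_pos :
  0 < sin (s - al) /\ 0 < sin (s - be) /\ 0 < sin (s - ga) /\ 0 < sin (s - de).
Proof.
  destruct barred_angles_in_0_PI as (Ba & Bb & Bc & Bd).
  unfold albar, bebar, gabar, debar in *.
  repeat split; apply sin_gt_0; lra.
Qed.

Let sin_half_signed_sums_neq0 :
  sin s <> 0 /\ sin (al + be - s) <> 0 /\ sin (al + ga - s) <> 0 /\ sin (al + de - s) <> 0.
Proof.
  split; [|split; [|split]].
  - apply (sin_neq0_of_double _ _ (Hnondeg true true true)). cbv [sgn]. lra.
  - apply (sin_neq0_of_double _ _ (Hnondeg true false false)). cbv [sgn]. lra.
  - apply (sin_neq0_of_double _ _ (Hnondeg false true false)). cbv [sgn]. lra.
  - apply (sin_neq0_of_double _ _ (Hnondeg false false true)). cbv [sgn]. lra.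
Qed.

Lemma pair_ratios_pos : 0 < cr al be ga de /\ 0 < cs al be ga de /\ 0 < cf al be ga de.
Proof.
  destruct sin_barred_pos as (Ta & Tb & Tc & Td).
  assert (Ha : 0 < sin_ratio s al) by (apply Rdiv_lt_0_compat; [apply sin_gt_0|]; lra).
  assert (Hc : 0 < sin_ratio s ga) by (apply Rdiv_lt_0_compat; [apply sin_gt_0|]; lra).
  assert (Hd : 0 < sin_ratio s de) by (apply Rdiv_lt_0_compat; [apply sin_gt_0|]; lra).
  split; [|split]; apply Rmult_lt_0_compat; assumption.
Qed.

Lemma pair_ratio_gaps_pos :
  0 < (cr al be ga de - 1) * (cr al be ga de - cM al be ga de) /\
  0 < (cs al be ga de - 1) * (cs al be ga de - cM al be ga de) /\
  0 < (cf al be ga de - 1) * (cf al be ga de - cM al be ga de).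
Proof.
  destruct sin_barred_pos as (Ta & Tb & Tc & Td).
  destruct sin_half_signed_sums_neq0 as (HK & Hab & Hag & Had).
  destruct pair_ratios_pos as (Hr & Hs & Hf).
  assert (Hgd : sin (ga + de - s) <> 0).
  { replace (ga + de - s) with (- (al + be - s)) by lra.
    rewrite sin_neg. now apply Ropp_neq_0_compat. }
  split; [|split].
  - replace (cM al be ga de) with (cr al be ga de * (cb al be ga de * cc al be ga de))
      by (unfold cM, cr; ring).
    apply (sin_ratio_pair_pos s al de be ga); auto; lra.
  - replace (cM al be ga de) with (cs al be ga de * (ca al be ga de * cb al be ga de))
      by (unfold cM, cs; ring).
    apply (sin_ratio_pair_pos s ga de al be); auto; lra.
  - replace (cM al be ga de) with (cf al be ga de * (cb al be ga de * cd al be ga de))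
      by (unfold cM, cf; ring).
    apply (sin_ratio_pair_pos s al ga be de); auto; lra.
Qed.

Lemma pair_ratio_cycle_pos :
  0 < (cr al be ga de - 1) * (cs al be ga de - 1) * (cf al be ga de - 1)
      * (1 - cM al be ga de).
Proof.
  destruct sin_barred_pos as (Ta & Tb & Tc & Td).
  destruct sin_half_signed_sums_neq0 as (HK & Hab & Hag & Had).
  apply (sin_ratio_cycle_pos s al be ga de); auto.
Qed.

End Angles.

Theorem lemma4 (al be ga de : R) :
  0 < al < PI -> 0 < be < PI -> 0 < ga < PI -> 0 < de < PI ->
  (forall (s1 s2 s3 : bool) (k : Z),
      al + sgn s1 * be + sgn s2 * ga + sgn s3 * de <> 2 * IZR k * PI) ->
  0 < cM al be ga de ->
  (0 < albar al be ga de < PI /\ 0 < bebar al be ga de < PI /\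
   0 < gabar al be ga de < PI /\ 0 < debar al be ga de < PI) /\
  (0 < cr al be ga de /\ 0 < cs al be ga de /\ 0 < cf al be ga de /\
   0 < (cr al be ga de - 1) * (cr al be ga de - cM al be ga de) /\
   0 < (cs al be ga de - 1) * (cs al be ga de - cM al be ga de) /\
   0 < (cf al be ga de - 1) * (cf al be ga de - cM al be ga de) /\
   0 < (cr al be ga de - 1) * (cs al be ga de - 1) * (cf al be ga de - 1)
       * (1 - cM al be ga de)).
Proof.
  intros Hal Hbe Hga Hde Hnondeg HM.
  split; [now apply barred_angles_in_0_PI|].
  destruct (pair_ratios_pos al be ga de) as (Hr & Hs & Hf); auto.
  destruct (pair_ratio_gaps_pos al be ga de) as (Gr & Gs & Gf); auto.
  pose proof (pair_ratio_cycle_pos al be ga de Hal Hbe Hga Hde Hnondeg HM) as Hcycle.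
  repeat (split; [assumption|]); assumption.
Qed.
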